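(* Let $(X,\leqslant)$ be a finite partially ordered set with a maximum element, $U$ a finite set of users and $\lambda\colon U\to X$. Then among the spanning out-trees of $H^*=(X,E_0^* )$ that have minimum weight with respect to $\omega$, there exists one, $T=(X,E)$, with $E\subseteq E_0$.
   Context: $E_0=\{xy: x,y\in X,\ y\lessdot x\}$ is the arc set of the Hasse diagram, where $y\lessdot x$ means $y<x$ and there is no $z$ with $y<z<x$. $E_0^*=\{xy:x,y\in X,\ x>y\}$. A spanning out-tree of $H^*$ is a subgraph with vertex set $X$ that is a rooted tree with arcs oriented away from the root; its weight is the sum of its arc weights. $U(x)=\{u\in U:\lambda(u)=x\}$; for $yz\in E_0^*$, $\gamma(yz)=\{x\in X:x\geqslant z,\ x\not\geqslant y\}$ and $\omega(yz)=\sum_{x\in\gamma(yz)}|U(x)|$. *)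

From HB Require Import structures.
From mathcomp Require Import all_boot all_order.
Set Implicit Arguments. Unset Strict Implicit. Unset Printing Implicit Defensive.
Import Order.TTheory.
Local Open Scope order_scope.

Section Defs.
Variables (d : Order.disp_t) (X : finPOrderType d) (U : finType) (lambda : U -> X).

Definition covers (y x : X) : bool := (y < x) && [forall z, ~~ ((y < z) && (z < x))].

(* An arc xy is the ordered pair (x, y), oriented from x to y. *)
Definition E0 : {set X * X} := [set a | covers a.2 a.1].
Definition E0star : {set X * X} := [set a | a.2 < a.1].

Definition Uof (x : X) : {set U} := [set u | lambda u == x].
Definition gamma (a : X * X) : {set X} := [set x | (a.2 <= x) && ~~ (a.1 <= x)].
Definition omega (a : X * X) : nat := \sum_(x in gamma a) #|Uof x|.

Definition weight (E : {set X * X}) : nat := \sum_(a in E) omega a.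

Definition out_tree_at (r : X) (E : {set X * X}) : bool :=
  [&& #|[set a in E | a.2 == r]| == 0,
      [forall v, (v != r) ==> (#|[set a in E | a.2 == v]| == 1)] &
      [forall v, connect (fun x y => (x, y) \in E) r v]].

Definition spanning_out_tree (E : {set X * X}) : Prop :=
  E \subset E0star /\ exists r, out_tree_at r E.

Definition min_spanning_out_tree (E : {set X * X}) : Prop :=
  spanning_out_tree E /\
  forall E', spanning_out_tree E' -> weight E <= weight E'.
End Defs.

(** Every arc of an out-tree of [H^*] points downwards, so the root is the
    maximum [m] and each [v != m] has an in-arc [(x, v)] with [v < x].  The
    weight [omega (x, v)] only grows with [x], and every [x > v] lies above a
    cover [w] of [v], so among all possible in-arcs of [v] a cheapest one is a
    Hasse arc.  Giving each [v != m] its cheapest in-arc yields an out-tree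
    inside [E0] whose weight is a lower bound for every spanning out-tree. *)
From mathcomp Require Import all_boot all_order.
Set Implicit Arguments. Unset Strict Implicit. Unset Printing Implicit Defensive.
Import Order.TTheory.
Local Open Scope order_scope.

Local Notation above w := [set x | w < x].

Section Covers.
Variables (d : Order.disp_t) (X : finPOrderType d).

Lemma card_above_lt (v w : X) :
  v < w -> (#|above w| < #|above v|)%N.
Proof.
move=> vw; apply: proper_card; apply/properP; split.
  by apply/subsetP => x; rewrite !inE; apply: lt_trans.
by exists w; rewrite !inE ?vw ?ltxx.
Qed.

Lemma cover_below (v y : X) : v < y -> exists2 w, covers v w & w <= y.
Proof.
move=> vy; pose between w := (v < w) && (w <= y).
have between_y : between y by rewrite /between vy lexx.
have [w /andP[vw wy] wmax] := arg_maxnP (fun w => #|above w|) between_y.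
exists w => //; rewrite /covers vw; apply/forallP => z; apply/negP => /andP[vz zw].
have /wmax : between z by rewrite /between vz (le_trans (ltW zw) wy).
by rewrite /= leqNgt card_above_lt.
Qed.

Lemma E0_sub_E0star : E0 X \subset E0star X.
Proof. by apply/subsetP => a; rewrite !inE => /andP[]. Qed.

Lemma connect_E0star_ge (E : {set X * X}) (x y : X) :
  E \subset E0star X -> connect (fun x y => (x, y) \in E) x y -> y <= x.
Proof.
move=> sE /connectP[p]; elim: p x => [|z p IH] x /=; first by move=> _ ->.
move=> /andP[xz pz] ey; apply: le_trans (IH z pz ey) _.
by have := subsetP sE _ xz; rewrite inE => /ltW.
Qed.

Lemma spanning_out_tree_in_arc (E : {set X * X}) (m v : X) :
  (forall x, x <= m) -> spanning_out_tree E -> v != m ->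
  exists2 a, a \in E & a.2 = v.
Proof.
move=> mtop [sE [r /and3P[_ /forallP indeg /forallP reach]]] vm.
have rm : r = m by apply/le_anti; rewrite mtop (connect_E0star_ge sE (reach m)).
have /implyP/(_ _)/eqP := indeg v; rewrite rm => /(_ vm) card1.
have /card_gt0P[a] : (0 < #|[set a in E | a.2 == v]|)%N by rewrite card1.
by rewrite inE => /andP[aE /eqP av]; exists a.
Qed.

End Covers.

Section CheapestTree.
Variables (d : Order.disp_t) (X : finPOrderType d) (U : finType) (lambda : U -> X).

Local Notation omega := (omega lambda).

Lemma omega_homo (v w y : X) : w <= y -> (omega (w, v) <= omega (y, v))%N.
Proof.
move=> wy; apply: (sub_le_big leqnn) => [a b|x]; first exact: leq_addr.
rewrite !inE /= => /andP[-> wx]; apply: contra wx; exact: le_trans.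
Qed.

Lemma exists_cheapest_cover (v y : X) : v < y ->
  exists2 w, covers v w & forall x, v < x -> (omega (w, v) <= omega (x, v))%N.
Proof.
move=> vy; have [x0 vx0 x0min] := @arg_minnP _ y (fun x => v < x) (fun x => omega (x, v)) vy.
have [w vw wx0] := cover_below vx0.
by exists w => // x vx; apply: leq_trans (omega_homo v wx0) (x0min x vx).
Qed.

Definition cheapest_cover (v : X) : X :=
  odflt v [pick w | covers v w &&
                    [forall x, (v < x) ==> (omega (w, v) <= omega (x, v))%N]].

Lemma cheapest_coverP (v y : X) : v < y ->
  covers v (cheapest_cover v) /\
  forall x, v < x -> (omega (cheapest_cover v, v) <= omega (x, v))%N.
Proof.
move=> vy; rewrite /cheapest_cover; case: pickP => [w /andP[vw /forallP wmin] | none] /=.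
  by split=> // x; apply/implyP.
have [w vw wmin] := exists_cheapest_cover vy.
by have /negP[] := none w; rewrite vw; apply/forallP => x; apply/implyP/wmin.
Qed.

Variable m : X.
Hypothesis mtop : forall x, x <= m.

Definition cheapest_tree : {set X * X} :=
  [set a | (a.2 != m) && (a.1 == cheapest_cover a.2)].

Lemma below_top (v : X) : v != m -> v < m.
Proof. by move=> vm; rewrite lt_def eq_sym vm mtop. Qed.

Lemma cheapest_tree_sub_E0 : cheapest_tree \subset E0 X.
Proof.
apply/subsetP => -[x v]; rewrite !inE /= => /andP[vm /eqP ->].
by case: (cheapest_coverP (below_top vm)).
Qed.

Lemma cheapest_tree_in_arcs (v : X) :
  [set a in cheapest_tree | a.2 == v] = if v == m then set0 else [set (cheapest_cover v, v)].
Proof.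
apply/setP => -[x y]; rewrite !inE /=; have [->|vm] := eqVneq v m.
  by rewrite inE; case: eqVneq => [->|]; rewrite ?eqxx ?andbF.
by rewrite inE xpair_eqE; case: (eqVneq y v) => [->|]; rewrite ?vm ?andbF ?andbT.
Qed.

Lemma cheapest_tree_reach (v : X) : connect (fun x y => (x, y) \in cheapest_tree) m v.
Proof.
have [n] := ubnP #|above v|; elim: n v => // n IH v.
rewrite ltnS => vn; have [->|vm] := eqVneq v m; first exact: connect0.
have [/andP[vc _] _] := cheapest_coverP (below_top vm).
apply: connect_trans (IH _ (leq_trans (card_above_lt vc) vn)) (connect1 _).
by rewrite inE /= vm eqxx.
Qed.

Lemma cheapest_tree_spanning : spanning_out_tree cheapest_tree.
Proof.
split; first exact: subset_trans cheapest_tree_sub_E0 (E0_sub_E0star X).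
exists m; apply/and3P; split.
- by rewrite cheapest_tree_in_arcs eqxx cards0.
- by apply/forallP => v; apply/implyP => /negPf vm; rewrite cheapest_tree_in_arcs vm cards1.
- by apply/forallP => v; exact: cheapest_tree_reach.
Qed.

Lemma weight_by_head (E : {set X * X}) :
  weight lambda E = (\sum_v \sum_(a in [set a in E | a.2 == v]) omega a)%N.
Proof.
rewrite /weight (partition_big snd xpredT) //=.
by apply: eq_bigr => v _; apply: eq_bigl => a; rewrite inE.
Qed.

Lemma cheapest_tree_min (E : {set X * X}) :
  spanning_out_tree E -> (weight lambda cheapest_tree <= weight lambda E)%N.
Proof.
move=> spE; rewrite !weight_by_head; apply: leq_sum => v _.
rewrite cheapest_tree_in_arcs; case: eqVneq => [_|vm]; first by rewrite big_set0.
have [a aE av] := spanning_out_tree_in_arc mtop spE vm.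
rewrite big_set1 (bigD1 a) /=; last by rewrite inE aE av eqxx.
apply: leq_trans (leq_addr _ _).
have := subsetP spE.1 a aE; rewrite inE av => va.
have [_ cmin] := cheapest_coverP (below_top vm).
by case: a {aE} av va => x y /= -> /cmin.
Qed.

End CheapestTree.

Theorem corollary4 (d : Order.disp_t) (X : finPOrderType d) (U : finType)
  (lambda : U -> X) :
  (exists m : X, forall x : X, x <= m) ->
  exists E : {set X * X},
    min_spanning_out_tree lambda E /\ E \subset E0 X.
Proof.
move=> [m mtop]; exists (cheapest_tree lambda m); split; last first.
  exact: cheapest_tree_sub_E0.
split; first exact: cheapest_tree_spanning.
by move=> E; apply: cheapest_tree_min.
Qed.
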